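(* Let $\mathcal{B}$ be an associative algebra over $\mathbb{C}$, let $\mathcal{A}$ denote the set of all matrices (of arbitrary finite sizes) with entries in $\mathcal{B}$, with the convention that the product of two matrices is defined to be zero if their sizes do not match, and let $\Omega = \mathcal{A}\otimes\bigwedge(\mathbb{C}^2)$. Suppose $(\Omega,\mathrm{d},\bar{\mathrm{d}})$ is a bidifferential calculus. Fix positive integers $n,N,N'$. Let $\boldsymbol{P},\boldsymbol{R}\in\mathrm{Mat}(N,N,\mathcal{B})$, $\tilde{\boldsymbol{U}}\in\mathrm{Mat}(n,N',\mathcal{B})$ and $\tilde{\boldsymbol{V}}\in\mathrm{Mat}(N,n,\mathcal{B})$ be both $\mathrm{d}$-constant and $\bar{\mathrm{d}}$-constant, and put $\boldsymbol{Q}=\tilde{\boldsymbol{V}}\tilde{\boldsymbol{U}}$. Let $\boldsymbol{X}\in\mathrm{Mat}(N,N,\mathcal{B})$ and $\boldsymbol{Y}\in\mathrm{Mat}(N',N,\mathcal{B})$ satisfy $$\bar{\mathrm{d}}\boldsymbol{X}=(\mathrm{d}\boldsymbol{X})\,\boldsymbol{P},\qquad \bar{\mathrm{d}}\boldsymbol{Y}=(\mathrm{d}\boldsymbol{Y})\,\boldsymbol{P},\qquad \boldsymbol{R}\boldsymbol{X}-\boldsymbol{X}\boldsymbol{P}=-\boldsymbol{Q}\boldsymbol{Y}.$$ If $\boldsymbol{X}$ is invertible, then $\phi=\tilde{\boldsymbol{U}}\boldsymbol{Y}\boldsymbol{X}^{-1}\tilde{\boldsymbol{V}}\in\mathrm{Mat}(n,n,\mathcal{B})$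 satisfies $$\bar{\mathrm{d}}\phi=(\mathrm{d}\phi)\,\phi+\mathrm{d}\vartheta\qquad\text{with}\qquad \vartheta=\tilde{\boldsymbol{U}}\boldsymbol{Y}\boldsymbol{X}^{-1}\boldsymbol{R}\tilde{\boldsymbol{V}},$$ and consequently $\bar{\mathrm{d}}\,\mathrm{d}\,\phi=\mathrm{d}\phi\;\mathrm{d}\phi$.
   Context: A graded algebra is an associative algebra $\Omega$ over $\mathbb{C}$ with a decomposition $\Omega=\bigoplus_{r\ge0}\Omega^r$ into a subalgebra $\Omega^0$ and $\Omega^0$-bimodules $\Omega^r$ with $\Omega^r\Omega^s\subseteq\Omega^{r+s}$; here $\Omega^r=\mathcal{A}\otimes\bigwedge^r(\mathbb{C}^2)$. A bidifferential calculus is a unital graded algebra $\Omega$ with two $\mathbb{C}$-linear maps $\mathrm{d},\bar{\mathrm{d}}:\Omega\to\Omega$ of degree one (mapping $\Omega^r$ into $\Omega^{r+1}$) such that, for every $z\in\mathbb{C}$, $\mathrm{d}_z:=\bar{\mathrm{d}}-z\,\mathrm{d}$ satisfies $\mathrm{d}_z^2=0$ and the graded Leibniz rule $\mathrm{d}_z(\chi\chi')=(\mathrm{d}_z\chi)\chi'+(-1)^r\chi\,\mathrm{d}_z\chi'$ for $\chi\in\Omega^r$, $\chi'\in\Omega$ (equivalently: $\mathrm{d},\bar{\mathrm{d}}$ are graded derivations with $\mathrm{d}^2=\bar{\mathrm{d}}^2=\mathrm{d}\bar{\mathrm{d}}+\bar{\mathrm{d}}\mathrm{d}=0$). Here $\mathrm{d}$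 and $\bar{\mathrm{d}}$ act on matrices of all sizes over $\mathcal{B}$, and the Leibniz rule holds for all products of matrices of compatible sizes. An element $\chi$ is called $\mathrm{d}$-constant if $\mathrm{d}\chi=0$ and $\bar{\mathrm{d}}$-constant if $\bar{\mathrm{d}}\chi=0$. *)

From HB Require Import structures.
From mathcomp Require Import all_boot all_order all_algebra.
Set Implicit Arguments. Unset Strict Implicit. Unset Printing Implicit Defensive.
Import GRing.Theory.
Local Open Scope ring_scope.

(* Matrix-valued differential forms: an m x n matrix with entries in
   Omega = B (x) /\(C^2), written in the basis 1, e1, e2, e1/\e2 of /\(C^2):
   chi = fc0 + fc1 e1 + fc2 e2 + fc12 e1/\e2 with fc* in Mat(m,n,B). *)
Section Forms.
Variables (F : fieldType) (B : algType F).

Record form (m n : nat) := Form {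
  fc0 : 'M[B]_(m, n); fc1 : 'M[B]_(m, n);
  fc2 : 'M[B]_(m, n); fc12 : 'M[B]_(m, n) }.

Definition fzero m n : form m n := Form 0 0 0 0.

Definition fadd m n (a b : form m n) : form m n :=
  Form (fc0 a + fc0 b) (fc1 a + fc1 b) (fc2 a + fc2 b) (fc12 a + fc12 b).

Definition fscale m n (c : F) (a : form m n) : form m n :=
  Form (map_mx ( *:%R c) (fc0 a)) (map_mx ( *:%R c) (fc1 a))
       (map_mx ( *:%R c) (fc2 a)) (map_mx ( *:%R c) (fc12 a)).

(* product in Mat(B) (x) /\(C^2): e1 e1 = e2 e2 = 0, e2 e1 = - e1 e2 *)
Definition fmul m n p (a : form m n) (b : form n p) : form m p :=
  Form (fc0 a *m fc0 b)
       (fc0 a *m fc1 b + fc1 a *m fc0 b)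
       (fc0 a *m fc2 b + fc2 a *m fc0 b)
       (fc0 a *m fc12 b + fc12 a *m fc0 b + fc1 a *m fc2 b - fc2 a *m fc1 b).

Definition mx0 m n (M : 'M[B]_(m, n)) : form m n := Form M 0 0 0.

Definition homog (r : nat) m n (a : form m n) : Prop :=
  match r with
  | 0 => fc1 a = 0 /\ fc2 a = 0 /\ fc12 a = 0
  | 1 => fc0 a = 0 /\ fc12 a = 0
  | 2 => fc0 a = 0 /\ fc1 a = 0 /\ fc2 a = 0
  | _ => a = fzero m n
  end.

Definition formop := forall m n : nat, form m n -> form m n.

Definition graded_derivation (D : formop) : Prop :=
  (forall m n (a b : form m n), D m n (fadd a b) = fadd (D m n a) (D m n b)) /\
  (forall m n (c : F) (a : form m n), D m n (fscale c a) = fscale c (D m n a)) /\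
  (forall (r : nat) m n (a : form m n), homog r a -> homog r.+1 (D m n a)) /\
  (forall (r : nat) m n p (a : form m n) (b : form n p), homog r a ->
      D m p (fmul a b) = fadd (fmul (D m n a) b) (fscale ((-1) ^+ r) (fmul a (D n p b)))).

Definition bidifferential_calculus (d dbar : formop) : Prop :=
  [/\ graded_derivation d, graded_derivation dbar,
      (forall m n (a : form m n), d m n (d m n a) = fzero m n),
      (forall m n (a : form m n), dbar m n (dbar m n a) = fzero m n) &
      (forall m n (a : form m n),
          fadd (d m n (dbar m n a)) (dbar m n (d m n a)) = fzero m n)].

End Forms.

(** On 0-forms the [e1]- and [e2]-coefficients of [d] and [dbar] are
    ordinary derivations [a] and [b] of the matrix algebra, and a 1-form is
    determined by these two coefficients, so the first identity reduces to
    one about a pair of matrix derivations.  For [Z = Y X^-1] the relations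
    [b X = (a X) P], [b Y = (a Y) P] give [b Z = (a Z) (X P X^-1)], while the
    Sylvester equation gives [V U Z = X P X^-1 - R]; as [U] and [V] are
    constant, [b phi = U (a Z) (X P X^-1) V = (a phi) phi + a theta].
    Applying [d] to the first identity and using [d^2 = 0], the graded
    Leibniz rule and [d dbar = - dbar d] gives the second. *)

From Pilot Require Import Defs.
From HB Require Import structures.
From mathcomp Require Import all_boot all_order all_algebra.
Set Implicit Arguments. Unset Strict Implicit. Unset Printing Implicit Defensive.
Import GRing.Theory.
Local Open Scope ring_scope.

Section MatrixDerivation.
Variables (F : fieldType) (B : algType F).
Variable a : forall {m n}, 'M[B]_(m, n) -> 'M[B]_(m, n).
Hypothesis aM : forall m n p (A : 'M[B]_(m, n)) (C : 'M[B]_(n, p)),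
  a (A *m C) = a A *m C + A *m a C.

Lemma derivation1 N : a (1%:M : 'M[B]_N) = 0.
Proof.
have := aM (1%:M : 'M[B]_N) 1%:M; rewrite !mul1mx mulmx1 => /eqP.
by rewrite -{1}[a 1%:M]addr0 (inj_eq (addrI _)) eq_sym => /eqP.
Qed.

Lemma derivation_invmx N (X Xinv : 'M[B]_N) :
  X *m Xinv = 1%:M -> Xinv *m X = 1%:M -> a Xinv = - (Xinv *m a X *m Xinv).
Proof.
move=> XXinv XinvX.
have : Xinv *m a (X *m Xinv) = 0 by rewrite XXinv derivation1 mulmx0.
by rewrite aM mulmxDr !mulmxA XinvX mul1mx => /eqP; rewrite addrC addr_eq0 => /eqP.
Qed.

Lemma derivation_mulmx_const m n p q (U : 'M[B]_(m, n)) (M : 'M[B]_(n, p))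
    (V : 'M[B]_(p, q)) :
  a U = 0 -> a V = 0 -> a (U *m M *m V) = U *m a M *m V.
Proof. by move=> aU aV; rewrite !aM aU aV mul0mx add0r mulmx0 addr0. Qed.

End MatrixDerivation.

Lemma sylvester_mulmx_invmx (F : fieldType) (B : algType F) N N'
    (R P X Xinv : 'M[B]_N) (Q : 'M[B]_(N, N')) (Y : 'M[B]_(N', N)) :
  R *m X - X *m P = - (Q *m Y) -> X *m Xinv = 1%:M ->
  Q *m (Y *m Xinv) = X *m P *m Xinv - R.
Proof.
move=> sylvester XXinv.
by rewrite mulmxA -[Q *m Y]opprK -sylvester opprB mulmxBl -[R *m X *m Xinv]mulmxA XXinv mulmx1.
Qed.

Section TwoDerivations.
Variables (F : fieldType) (B : algType F).
Variables a b : forall {m n}, 'M[B]_(m, n) -> 'M[B]_(m, n).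
Hypothesis aM : forall m n p (A : 'M[B]_(m, n)) (C : 'M[B]_(n, p)),
  a (A *m C) = a A *m C + A *m a C.
Hypothesis bM : forall m n p (A : 'M[B]_(m, n)) (C : 'M[B]_(n, p)),
  b (A *m C) = b A *m C + A *m b C.

Variables (N N' : nat) (P X Xinv : 'M[B]_N) (Y : 'M[B]_(N', N)).
Hypotheses (XXinv : X *m Xinv = 1%:M) (XinvX : Xinv *m X = 1%:M).

Lemma derivation_mulmx_invmx :
  b X = a X *m P -> b Y = a Y *m P ->
  b (Y *m Xinv) = a (Y *m Xinv) *m (X *m P *m Xinv).
Proof.
move=> bX bY.
rewrite aM bM (derivation_invmx aM XXinv XinvX) (derivation_invmx bM XXinv XinvX) bX bY.
rewrite mulmxDl !mulmxN !mulNmx !mulmxA.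
by rewrite -[a Y *m Xinv *m X]mulmxA -[Y *m Xinv *m a X *m Xinv *m X]mulmxA XinvX !mulmx1.
Qed.

Lemma derivation_potential n (R : 'M[B]_N) (U : 'M[B]_(n, N')) (V : 'M[B]_(N, n)) :
  a U = 0 -> b U = 0 -> a V = 0 -> b V = 0 -> a R = 0 ->
  b X = a X *m P -> b Y = a Y *m P ->
  R *m X - X *m P = - ((V *m U) *m Y) ->
  b (U *m Y *m Xinv *m V) =
    a (U *m Y *m Xinv *m V) *m (U *m Y *m Xinv *m V) + a (U *m Y *m Xinv *m R *m V).
Proof.
move=> aU bU aV bV aR bX bY sylvester.
have bZ := derivation_mulmx_invmx bX bY.
have VUZ := sylvester_mulmx_invmx sylvester XXinv.
rewrite -!(mulmxA U Y Xinv) -[U *m (Y *m Xinv) *m R]mulmxA.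
set Z := Y *m Xinv in bZ VUZ *.
rewrite (derivation_mulmx_const bM) // !(derivation_mulmx_const aM _ aU aV).
rewrite aM aR mulmx0 addr0 bZ.
have -> : U *m a Z *m V *m (U *m Z *m V) = U *m (a Z *m (V *m U *m Z)) *m V.
  by rewrite !mulmxA.
by rewrite VUZ mulmxBr mulmxBr mulmxBl subrK.
Qed.

End TwoDerivations.

Section Forms.
Variables (F : fieldType) (B : algType F).
Implicit Types (m n p : nat).

Lemma form_ext m n (x y : Defs.form B m n) :
  fc0 x = fc0 y -> fc1 x = fc1 y -> fc2 x = fc2 y -> fc12 x = fc12 y -> x = y.
Proof. by case: x => ????; case: y => ???? /= -> -> -> ->. Qed.

Lemma fscale1 m n (x : Defs.form B m n) : fscale 1 x = x.
Proof. by case: x => *; apply: form_ext; apply/matrixP => i j; rewrite mxE scale1r. Qed.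

Lemma fmul0f m n p (x : Defs.form B n p) : fmul (fzero B m n) x = fzero B m p.
Proof. by apply: form_ext; rewrite /= !mul0mx ?addr0 ?subr0. Qed.

Lemma fadd0f m n (x : Defs.form B m n) : fadd (fzero B m n) x = x.
Proof. by case: x => *; apply: form_ext; rewrite /= add0r. Qed.

Lemma faddf0 m n (x : Defs.form B m n) : fadd x (fzero B m n) = x.
Proof. by case: x => *; apply: form_ext; rewrite /= addr0. Qed.

Lemma fadd_scaleN1_eq0 m n (x y : Defs.form B m n) :
  fadd (fscale (-1) x) y = fzero B m n -> y = x.
Proof.
have scaleN1 (M : 'M[B]_(m, n)) : map_mx ( *:%R (-1 : F)) M = - M.
  by apply/matrixP => i j; rewrite !mxE scaleN1r.
move=> xy0; apply: form_ext; apply/eqP; rewrite -subr_eq0 addrC;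
  [move: (congr1 (@fc0 _ _ _ _) xy0) | move: (congr1 (@fc1 _ _ _ _) xy0)
  | move: (congr1 (@fc2 _ _ _ _) xy0) | move: (congr1 (@fc12 _ _ _ _) xy0)];
  by rewrite /= scaleN1 => ->.
Qed.

Definition deg1part (k : bool) m n (x : Defs.form B m n) := if k then fc1 x else fc2 x.

Lemma deg1part0 k m n : deg1part k (fzero B m n) = 0.
Proof. by case: k. Qed.

Lemma deg1partD k m n (x y : Defs.form B m n) :
  deg1part k (fadd x y) = deg1part k x + deg1part k y.
Proof. by case: k. Qed.

Lemma deg1part_fmul_mx0r k m n p (x : Defs.form B m n) (C : 'M[B]_(n, p)) :
  deg1part k (fmul x (mx0 C)) = deg1part k x *m C.
Proof. by case: k; rewrite /= mulmx0 add0r. Qed.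

Lemma deg1part_fmul_mx0l k m n p (A : 'M[B]_(m, n)) (y : Defs.form B n p) :
  deg1part k (fmul (mx0 A) y) = A *m deg1part k y.
Proof. by case: k; rewrite /= mul0mx addr0. Qed.

Lemma homog1_fadd m n (x y : Defs.form B m n) :
  homog 1 x -> homog 1 y -> homog 1 (fadd x y).
Proof. by move=> [/= -> ->] [/= -> ->]; rewrite !addr0. Qed.

Lemma homog1_fmul_mx0r m n p (x : Defs.form B m n) (C : 'M[B]_(n, p)) :
  homog 1 x -> homog 1 (fmul x (mx0 C)).
Proof. by move=> [/= -> ->]; rewrite !mul0mx !mulmx0 !addr0 subr0. Qed.

Lemma homog1_ext m n (x y : Defs.form B m n) : homog 1 x -> homog 1 y ->
  (forall k, deg1part k x = deg1part k y) -> x = y.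
Proof.
move=> [x0 x12] [y0 y12] xy.
by apply: form_ext; rewrite ?x0 ?y0 ?x12 ?y12 //; [apply: (xy true) | apply: (xy false)].
Qed.

Section GradedDerivation.
Variable D : formop B.
Hypothesis HD : graded_derivation D.

Lemma graded_derivation_mx0_homog m n (M : 'M[B]_(m, n)) : homog 1 (D (mx0 M)).
Proof. by case: HD => _ [_ [Dhomog _]]; apply: (Dhomog 0%N). Qed.

Lemma graded_derivation_mx0_mul m n p (A : 'M[B]_(m, n)) (C : 'M[B]_(n, p)) :
  D (mx0 (A *m C)) = fadd (fmul (D (mx0 A)) (mx0 C)) (fmul (mx0 A) (D (mx0 C))).
Proof.
case: HD => _ [_ [_ DM]].
have -> : mx0 (A *m C) = fmul (mx0 A) (mx0 C).
  by rewrite /fmul /mx0 /= !mulmx0 !mul0mx !addr0 subr0.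
by rewrite (DM 0%N) // expr0 fscale1.
Qed.

Definition mx_deg1 k m n (M : 'M[B]_(m, n)) := deg1part k (D (mx0 M)).

Lemma mx_deg1M k m n p (A : 'M[B]_(m, n)) (C : 'M[B]_(n, p)) :
  mx_deg1 k (A *m C) = mx_deg1 k A *m C + A *m mx_deg1 k C.
Proof. by rewrite /mx_deg1 graded_derivation_mx0_mul deg1partD deg1part_fmul_mx0r deg1part_fmul_mx0l. Qed.

End GradedDerivation.

Lemma bidifferential_dbar_d (d dbar : formop B) m (phi theta : 'M[B]_m) :
  bidifferential_calculus d dbar ->
  dbar _ _ (mx0 phi) = fadd (fmul (d _ _ (mx0 phi)) (mx0 phi)) (d _ _ (mx0 theta)) ->
  dbar _ _ (d _ _ (mx0 phi)) = fmul (d _ _ (mx0 phi)) (d _ _ (mx0 phi)).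
Proof.
move=> [Hd _ dd _ anti] dbar_phi.
have := anti _ _ (mx0 phi); rewrite dbar_phi.
case: (Hd) => dD [_ [_ dM]].
rewrite dD dd faddf0 (dM 1%N) ?dd ?fmul0f ?fadd0f ?expr1.
  exact: fadd_scaleN1_eq0.
exact: graded_derivation_mx0_homog.
Qed.

End Forms.

Theorem theorem1 (F : fieldType) (B : algType F) (d dbar : formop B)
  (Hcalc : bidifferential_calculus d dbar)
  (n N N' : nat) (hn : (0 < n)%N) (hN : (0 < N)%N) (hN' : (0 < N')%N)
  (P R : 'M[B]_N) (U : 'M[B]_(n, N')) (V : 'M[B]_(N, n))
  (dP : d _ _ (mx0 P) = fzero _ _ _) (dbP : dbar _ _ (mx0 P) = fzero _ _ _)
  (dR : d _ _ (mx0 R) = fzero _ _ _) (dbR : dbar _ _ (mx0 R) = fzero _ _ _)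
  (dU : d _ _ (mx0 U) = fzero _ _ _) (dbU : dbar _ _ (mx0 U) = fzero _ _ _)
  (dV : d _ _ (mx0 V) = fzero _ _ _) (dbV : dbar _ _ (mx0 V) = fzero _ _ _)
  (X Xinv : 'M[B]_N) (Y : 'M[B]_(N', N))
  (HX : dbar _ _ (mx0 X) = fmul (d _ _ (mx0 X)) (mx0 P))
  (HY : dbar _ _ (mx0 Y) = fmul (d _ _ (mx0 Y)) (mx0 P))
  (HRX : R *m X - X *m P = - ((V *m U) *m Y))
  (HXinv1 : X *m Xinv = 1%:M) (HXinv2 : Xinv *m X = 1%:M) :
  let phi := U *m Y *m Xinv *m V in
  let theta := U *m Y *m Xinv *m R *m V in
  dbar _ _ (mx0 phi) = fadd (fmul (d _ _ (mx0 phi)) (mx0 phi)) (d _ _ (mx0 theta)) /\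
  dbar _ _ (d _ _ (mx0 phi)) = fmul (d _ _ (mx0 phi)) (d _ _ (mx0 phi)).
Proof.
move=> phi theta.
have [Hd Hdb _ _ _] := Hcalc.
suff dbar_phi : dbar _ _ (mx0 phi) =
    fadd (fmul (d _ _ (mx0 phi)) (mx0 phi)) (d _ _ (mx0 theta)).
  by split; last exact: bidifferential_dbar_d dbar_phi.
apply: homog1_ext.
- exact: graded_derivation_mx0_homog.
- by apply: homog1_fadd; [apply: homog1_fmul_mx0r|]; exact: graded_derivation_mx0_homog.
move=> k; rewrite deg1partD deg1part_fmul_mx0r.
apply: (derivation_potential (mx_deg1M Hd k) (mx_deg1M Hdb k) HXinv1 HXinv2);
  rewrite /mx_deg1 ?dU ?dbU ?dV ?dbV ?dR ?deg1part0 //.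
- by rewrite HX deg1part_fmul_mx0r.
- by rewrite HY deg1part_fmul_mx0r.
- exact: HRX.
Qed.
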